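(* Let $G$ be a graph and $x_0$ a vertex of degree two in $G$ with two distinct neighbors $x_1,x_2$, and let $J'=G/x_0$. If $J'$ has an osculating bicycle $(Q,Q')$ such that neither $Q$ nor $Q'$ is a cycle of $G$, then (the edges of) $Q\cup Q'$ form an $x_0$-isolating even cycle of $G$.
   Context: Graphs are loopless; multiple edges allowed (a pair of parallel edges forms a cycle of length two). $G/x_0$ (bicontraction of $x_0$) is the graph obtained from $G$ by contracting the two edges $x_0x_1$ and $x_0x_2$ into a single vertex; every other edge of $G$ is identified with the corresponding edge of $G/x_0$ (parallel edges may arise). An osculating bicycle is a pair of cycles $(Q,Q')$ that have exactly one vertex in common and whose lengths have the same parity. For a vertex $v$ of $G$, a cycle $C$ of $G-v$ is $v$-isolating if $v$ is an isolated vertex of $G-V(C)$. *)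

(* Finite loopless multigraphs given by a vertex finType V,
   an edge finType E, and endpoint maps src tgt : E -> V. *)
From mathcomp Require Import all_boot.
Set Implicit Arguments. Unset Strict Implicit. Unset Printing Implicit Defensive.

Section Graphs.
Variables (V E : finType) (src tgt : E -> V).

Definition joins (e : E) (u v : V) : bool :=
  ((src e == u) && (tgt e == v)) || ((src e == v) && (tgt e == u)).

Definition incident (e : E) (v : V) : bool := (src e == v) || (tgt e == v).

(* C is (the edge set of) a cycle in the graph with edge set A (and
   endpoint maps src tgt): there are distinct vertices v_0..v_{k-1} and
   distinct edges e_0..e_{k-1} of A, k >= 2, with e_i joining v_i and
   v_{i+1 mod k}.  (k = 2 means two parallel edges.) *)
Definition is_cycle (A : {set E}) (C : {set E}) : Prop :=
  exists (vs : seq V) (es : seq E),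
    [/\ 2 <= size es, size vs = size es, uniq vs & uniq es] /\
    [/\ {subset es <= A}, C = [set e in es] &
        all (fun p => joins p.1 p.2.1 p.2.2) (zip es (zip vs (rot 1 vs)))].

Definition cverts (C : {set E}) : {set V} :=
  [set v | [exists e in C, incident e v]].

Definition del_vertex_edges (v : V) : {set E} := [set e | ~~ incident e v].

(* degree (loopless graph: each incident edge counted once) *)
Definition degree (v : V) : nat := #|[set e | incident e v]|.

(* C is a v-isolating cycle: a cycle of G - v with v isolated in G - V(C) *)
Definition isolating_cycle (v : V) (C : {set E}) : Prop :=
  is_cycle (del_vertex_edges v) C /\
  (forall e, (src e == v -> tgt e \in cverts C) /\ (tgt e == v -> src e \in cverts C)).

End Graphs.

(* Bicontraction G/x0 (x0 of degree 2 with neighbours x1, x2): x0, x1, x2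
   are merged into the single vertex x1; the other edges keep their identity.
   Vertices x0, x2 remain as isolated vertices of the vertex type (harmless:
   cycles only involve endpoints of their edges).  Edges that would become
   loops (edges joining x1 and x2) are removed, graphs being loopless. *)
Section Bicontraction.
Variables (V E : finType) (src tgt : E -> V) (x0 x1 x2 : V).

Definition bc_map (v : V) : V := if (v == x0) || (v == x2) then x1 else v.
Definition bc_src (e : E) : V := bc_map (src e).
Definition bc_tgt (e : E) : V := bc_map (tgt e).
Definition bc_edges : {set E} :=
  [set e | ~~ incident src tgt e x0 & bc_src e != bc_tgt e].

End Bicontraction.

Definition osculating_bicycle (V E : finType) (s t : E -> V) (A : {set E})
  (Q Q' : {set E}) : Prop :=
  [/\ is_cycle s t A Q, is_cycle s t A Q',
      #|cverts s t Q :&: cverts s t Q'| = 1 & odd #|Q| = odd #|Q'|].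

(* Contracting x0 merges x0, x1, x2 into the single vertex x1 of G/x0.  A
   cycle of G/x0 that is not a cycle of G must therefore pass through x1, and
   read in G it is a path between two vertices of {x1, x2} avoiding x0; its
   ends differ, for otherwise it would already be a cycle of G.  So Q and Q'
   are x1-x2 paths of G - x0.  As Q and Q' meet only in the merged vertex,
   these paths are internally disjoint and share no edge (a common edge would
   be a loop at x1 in G/x0), hence Q u Q' is a cycle of G - x0 of length
   |Q| + |Q'|, which is even.  It contains both neighbours x1, x2 of x0. *)

From mathcomp Require Import all_boot zify.
Set Implicit Arguments. Unset Strict Implicit. Unset Printing Implicit Defensive.

Section Walks.
Variables (V E : finType) (src tgt : E -> V).
Local Notation joins := (joins src tgt).
Local Notation incident := (incident src tgt).
Local Notation cverts := (cverts src tgt).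

Lemma joinsC e u v : joins e u v = joins e v u.
Proof. by rewrite /joins orbC. Qed.

Lemma joins_incident e u v : joins e u v -> incident e u.
Proof. by rewrite /joins /incident => /orP [/andP [-> _]|/andP [_ ->]]; rewrite ?orbT. Qed.

Lemma loopless_joins_other e u v : src e != tgt e -> joins e u v ->
  (src e = u -> tgt e = v) /\ (tgt e = u -> src e = v).
Proof.
move=> sNt /orP [] /andP [/eqP <- /eqP <-]; split=> // h;
  by rewrite h eqxx in sNt.
Qed.

Lemma joins_neq e u v : src e != tgt e -> joins e u v -> u != v.
Proof. by move=> sNt /orP [] /andP [/eqP <- /eqP <-]; rewrite // eq_sym. Qed.

Lemma cvertsP (C : {set E}) v : reflect (exists2 e, e \in C & incident e v) (v \in cverts C).
Proof.
by rewrite inE; apply: (iffP existsP) => [[e /andP []]|[e Ce ev]]; exists e => //; rewrite Ce.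
Qed.

Lemma cverts_src (C : {set E}) e : e \in C -> src e \in cverts C.
Proof. by move=> eC; apply/cvertsP; exists e; rewrite /incident ?eqxx. Qed.

Lemma cverts_tgt (C : {set E}) e : e \in C -> tgt e \in cverts C.
Proof. by move=> eC; apply/cvertsP; exists e; rewrite /incident ?eqxx ?orbT. Qed.

Lemma cvertsS (C D : {set E}) : C \subset D -> {subset cverts C <= cverts D}.
Proof. by move=> /subsetP CD v /cvertsP [e /CD De ev]; apply/cvertsP; exists e. Qed.

Fixpoint walk (u : V) (l : seq (E * V)) (w : V) : bool :=
  if l is (e, v) :: l' then joins e u v && walk v l' w else u == w.

Lemma walk_cat u l1 l2 w : walk u (l1 ++ l2) w =
  walk u l1 (last u (map snd l1)) && walk (last u (map snd l1)) l2 w.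
Proof. by elim: l1 u => [|[e v] l1 IH] u /=; rewrite ?eqxx // IH andbA. Qed.

Lemma walk_last u l w : walk u l w -> last u (map snd l) = w.
Proof. by elim: l u => [|[e v] l IH] u /=; [move/eqP | case/andP => _ /IH]. Qed.

Lemma walk_last_mem u l w : walk u l w -> 0 < size l -> w \in map snd l.
Proof. by move/walk_last <-; case: l => //= p l _; apply: mem_last. Qed.

Lemma walk_rcons u l e v w : walk u (rcons l (e, v)) w =
  [&& walk u l (last u (map snd l)), joins e (last u (map snd l)) v & v == w].
Proof. by rewrite -cats1 walk_cat. Qed.

Lemma walk_rev u l w : walk u l w -> exists lR,
  [/\ walk w lR u, map fst lR = rev (map fst l) & w :: map snd lR = rev (u :: map snd l)].
Proof.
elim: l u => [|[e v] l IH] u /=.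
  by move/eqP => ->; exists [::]; rewrite /= eqxx.
case/andP => uv /IH [lR [wR e1 e2]].
exists (rcons lR (e, u)); split.
- by rewrite walk_rcons (walk_last wR) wR joinsC uv eqxx.
- by rewrite map_rcons e1 rev_cons.
- by rewrite map_rcons -rcons_cons e2 [RHS]rev_cons.
Qed.

Lemma walk_cverts u l w : walk u l w -> 0 < size l ->
  {subset u :: map snd l <= cverts [set e in map fst l]}.
Proof.
elim: l u => [|[e v] l IH] u //= /andP [uv vw] _ x.
have eC : e \in [set f in e :: map fst l] by rewrite inE mem_head.
have sub : cverts [set f in map fst l] \subset cverts [set f in e :: map fst l].
  by apply/subsetP; apply: cvertsS; apply/subsetP => f; rewrite !inE => ->; rewrite orbT.
rewrite !in_cons => /predU1P [-> | /predU1P [-> | xl]].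
- by apply/cvertsP; exists e => //; apply: joins_incident uv.
- by apply/cvertsP; exists e => //; rewrite joinsC in uv; apply: joins_incident uv.
- apply: (subsetP sub); case: l xl {IH eC sub} vw (IH v) => // p l xl vw IH.
  by apply: (IH vw) => //; rewrite in_cons xl orbT.
Qed.

Lemma walk_zip u es ws w : size es = size ws ->
  walk u (zip es ws) w =
  all (fun p => joins p.1 p.2.1 p.2.2) (zip es (zip (belast u ws) ws)) && (last u ws == w).
Proof. by elim: es u ws => [|e es IH] u [|v ws] //= [/IH ->]; rewrite andbA. Qed.

Record cycle_walk (A C : {set E}) (u : V) (l : seq (E * V)) : Prop := CycleWalk {
  cycle_walk_closed : walk u l u;
  cycle_walk_size : 1 < size l;
  cycle_walk_uniq_verts : uniq (map snd l);
  cycle_walk_uniq_edges : uniq (map fst l);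
  cycle_walk_sub : C \subset A;
  cycle_walk_edges : C = [set e in map fst l] }.

Lemma is_cycleP A C : is_cycle src tgt A C <-> exists u l, cycle_walk A C u l.
Proof.
split.
  case=> [[|v vs] [es [[es2 size_vs uvs ues] [esA -> jvs]]]]; first by rewrite -size_vs in es2.
  have size_es : size es = size (rcons vs v) by rewrite size_rcons.
  have fst_zip : map fst (zip es (rcons vs v)) = es.
    by rewrite -[map fst _]/(unzip1 _) unzip1_zip ?size_es.
  exists v, (zip es (rcons vs v)); split; rewrite ?fst_zip //.
  - by rewrite walk_zip // belast_rcons last_rcons eqxx andbT -rot1_cons.
  - by rewrite size_zip -size_es minnn.
  - by rewrite -[map snd _]/(unzip2 _) unzip2_zip ?size_es // -rot1_cons rot_uniq.
  - by apply/subsetP => e; rewrite inE => /esA.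
case=> u [l [walk_l size_l uvs ues CA defC]]; subst C.
have rot_vs : rot 1 (belast u (map snd l)) = map snd l.
  move: (walk_last walk_l); case/lastP: (map snd l) => [|vs v] //.
  by rewrite last_rcons belast_rcons => ->; rewrite rot1_cons.
exists (belast u (map snd l)), (map fst l); split; split => //.
- by rewrite size_map.
- by rewrite size_belast !size_map.
- by rewrite -(rot_uniq 1) rot_vs.
- by move=> e el; apply: (subsetP CA); rewrite inE.
- by move: walk_l; rewrite -{1}(zip_unzip l) walk_zip ?size_map // rot_vs => /andP [].
Qed.

Lemma cycle_walk_rot A C u l v : cycle_walk A C u l -> v \in map snd l ->
  exists l', cycle_walk A C v l'.
Proof.
case=> walk_l size_l uvs ues CA defC; subst C.
case/mapP => [[e v'] /= el ->] {v}.
case/splitPr: el walk_l size_l uvs ues CA => l1 l2 walk_l size_l uvs ues CA.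
have perm_l : perm_eq (l2 ++ rcons l1 (e, v')) (l1 ++ (e, v') :: l2).
  by rewrite perm_catC cat_rcons.
exists (l2 ++ rcons l1 (e, v')); split.
- move: walk_l; rewrite -cat_rcons !walk_cat map_rcons last_rcons /= => /andP [w1 w2].
  by rewrite (walk_last w2) w2 w1.
- by rewrite (perm_size perm_l).
- by rewrite (perm_uniq (perm_map _ perm_l)).
- by rewrite (perm_uniq (perm_map _ perm_l)).
- exact: CA.
- by apply/setP => f; rewrite !inE (perm_mem (perm_map _ perm_l)).
Qed.

Lemma walks_union_cycle (A : {set E}) u w l l' m m' :
  walk u l w -> walk u l' w -> map snd l = rcons m w -> map snd l' = rcons m' w ->
  uniq (u :: w :: m ++ m') -> uniq (map fst l ++ map fst l') ->
  [set e in map fst l ++ map fst l'] \subset A ->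
  is_cycle src tgt A [set e in map fst l ++ map fst l'].
Proof.
move=> walk_l walk_l' verts_l verts_l' uverts uedges sub.
have [lR [walk_lR edges_lR verts_lR]] := walk_rev walk_l'.
have {}verts_lR : map snd lR = rcons (rev m') u.
  by move: verts_lR; rewrite verts_l' -rcons_cons rev_rcons rev_cons => [[]].
have perm_edges : perm_eq (map fst (l ++ lR)) (map fst l ++ map fst l').
  by rewrite map_cat edges_lR perm_cat2l perm_rev.
have perm_verts : perm_eq (map snd (l ++ lR)) (u :: w :: m ++ m').
  rewrite map_cat verts_l verts_lR -!cats1 perm_sym.
  apply/permP => p; rewrite /= !count_cat count_rev /= !addn0.
  lia.
apply/is_cycleP; exists u, (l ++ lR); split.
- by rewrite walk_cat (walk_last walk_l) walk_l walk_lR.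
- rewrite size_cat -(size_map snd l) -(size_map snd lR) verts_l verts_lR.
  by rewrite !size_rcons addSn addnS.
- by rewrite (perm_uniq perm_verts).
- by rewrite (perm_uniq perm_edges).
- exact: sub.
- by apply/setP => e; rewrite !inE (perm_mem perm_edges).
Qed.

Section Loopless.
Hypothesis loopless : forall e, src e != tgt e.

Lemma joins_other_end e u v v' : joins e u v -> joins e u v' -> v = v'.
Proof.
move=> /(loopless_joins_other (loopless e)) [sv tv] /orP [] /andP [/eqP a /eqP b].
- by rewrite -b (sv a).
- by rewrite -a (tv b).
Qed.

Lemma degree2_incident x0 x1 x2 e1 e2 e :
  degree src tgt x0 = 2 -> x1 != x2 -> joins e1 x0 x1 -> joins e2 x0 x2 ->
  incident e x0 -> e = e1 \/ e = e2.
Proof.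
move=> deg2 x12 j1 j2 ex0.
have e12 : e1 != e2.
  by apply: contraNneq x12 => e12; rewrite e12 in j1; rewrite (joins_other_end j1 j2).
have : [set e1; e2] == [set f | incident f x0].
  rewrite eqEcard cards2 e12 -[#|_|]/(degree src tgt x0) deg2 andbT.
  apply/subsetP => f; rewrite !inE => /orP [] /eqP ->.
  - exact: joins_incident j1.
  - exact: joins_incident j2.
by move/eqP/setP/(_ e); rewrite !inE ex0 => /orP [] /eqP; [left | right].
Qed.

Lemma degree2_isolating_cycle x0 x1 x2 C :
  degree src tgt x0 = 2 -> x1 != x2 ->
  (exists e, joins e x0 x1) -> (exists e, joins e x0 x2) ->
  is_cycle src tgt (del_vertex_edges src tgt x0) C ->
  x1 \in cverts C -> x2 \in cverts C -> isolating_cycle src tgt x0 C.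
Proof.
move=> deg2 x12 [e1 j1] [e2 j2] cycC x1C x2C; split=> // e.
have nbr : incident e x0 -> exists2 y, y \in cverts C & joins e x0 y.
  by move=> /(degree2_incident deg2 x12 j1 j2) [] ->; [exists x1 | exists x2].
split=> /eqP ex0.
- have [|y yC /(loopless_joins_other (loopless e)) [/(_ ex0) -> //]] := nbr.
  by rewrite /incident ex0 eqxx.
- have [|y yC /(loopless_joins_other (loopless e)) [_ /(_ ex0) -> //]] := nbr.
  by rewrite /incident ex0 eqxx orbT.
Qed.

End Loopless.

End Walks.

Section Bicontraction.
Variables (V E : finType) (src tgt : E -> V) (x0 x1 x2 : V).
Hypothesis x12 : x1 != x2.
Local Notation bm := (bc_map x0 x1 x2).
Local Notation s' := (bc_src src x0 x1 x2).
Local Notation t' := (bc_tgt tgt x0 x1 x2).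
Local Notation A' := (bc_edges src tgt x0 x1 x2).

Lemma bc_map_eq_id v p : bm v = p -> p != x1 -> v = p.
Proof. by rewrite /bc_map; case: ifP => _ <- //; rewrite eqxx. Qed.

Lemma bc_map_neq_x2 v : bm v != x2.
Proof. by rewrite /bc_map; case: ifP => [_|/norP []]. Qed.

Lemma bc_edges_sub : A' \subset del_vertex_edges src tgt x0.
Proof. by apply/subsetP => e; rewrite !inE => /andP []. Qed.

Lemma joins_of_bc_joins e u v : joins s' t' e u v -> u != x1 -> v != x1 -> joins src tgt e u v.
Proof.
move=> /orP [] /andP [/eqP su /eqP tv] u1 v1; rewrite /joins.
- by rewrite (bc_map_eq_id su u1) (bc_map_eq_id tv v1) !eqxx.
- by rewrite (bc_map_eq_id su v1) (bc_map_eq_id tv u1) !eqxx orbT.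
Qed.

Lemma bc_map_eq_x1 v : v != x0 -> bm v = x1 -> v \in [:: x1; x2].
Proof.
rewrite /bc_map !inE => vx0; case: ifP => [/orP [vx | ->] | _ ->]; rewrite ?eqxx ?orbT //.
by rewrite vx in vx0.
Qed.

Lemma joins_of_bc_joins_x1 e w : e \in A' -> joins s' t' e x1 w -> w != x1 ->
  exists2 a, a \in [:: x1; x2] & joins src tgt e a w.
Proof.
rewrite inE /incident negb_or => /andP [/andP [sx0 tx0] _].
move=> /orP [] /andP [/eqP s1 /eqP tw] w1.
- by exists (src e); [exact: bc_map_eq_x1 | rewrite /joins eqxx (bc_map_eq_id tw w1) eqxx].
- by exists (tgt e); [exact: bc_map_eq_x1 | rewrite /joins (bc_map_eq_id s1 w1) !eqxx orbT].
Qed.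

Lemma walk_of_bc_walk u l w :
  walk s' t' u l w -> u != x1 -> x1 \notin map snd l -> walk src tgt u l w.
Proof.
elim: l u => [|[e v] l IH] u //= /andP [uv vw] u1; rewrite inE negb_or eq_sym => /andP [v1 l1].
by rewrite (joins_of_bc_joins uv u1 v1) IH.
Qed.

Lemma bc_walk_notin_x2 u l w : walk s' t' u l w -> x2 \notin map snd l.
Proof.
elim: l u => [|[e v] l IH] u //= /andP [uv /IH vl].
rewrite inE negb_or vl andbT eq_sym.
by case/orP: uv => /andP [/eqP su /eqP tv]; rewrite -?tv -?su; apply: bc_map_neq_x2.
Qed.

Lemma walk_of_bc_walk_from_x1 l w : walk s' t' x1 l w -> 0 < size l -> x1 \notin map snd l ->
  {subset map fst l <= A'} -> exists2 a, a \in [:: x1; x2] & walk src tgt a l w.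
Proof.
case: l => [|[e v] l] //= /andP [j vw] _; rewrite inE negb_or eq_sym => /andP [v1 l1] lA'.
have [a a12 ja] := joins_of_bc_joins_x1 (lA' e (mem_head _ _)) j v1.
by exists a; rewrite // ja (walk_of_bc_walk vw v1 l1).
Qed.

(* A cycle [Q] of [G/x0] through the merged vertex [x1] that is not a cycle
   of [G] is seen in [G] as a path [l] from [a] to [b] with inner vertices [mid]. *)
Record bc_path (Q : {set E}) (a b : V) (l : seq (E * V)) (mid : seq V) : Prop := BcPath {
  bc_path_src : a \in [:: x1; x2];
  bc_path_tgt : b \in [:: x1; x2];
  bc_path_walk : walk src tgt a l b;
  bc_path_size : 1 < size l;
  bc_path_verts : map snd l = rcons mid b;
  bc_path_mid : uniq (x1 :: x2 :: mid);
  bc_path_uniq_edges : uniq (map fst l);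
  bc_path_edges : Q = [set e in map fst l];
  bc_path_sub : Q \subset A';
  bc_path_cverts : {subset x1 :: mid <= cverts s' t' Q} }.

Lemma notin_mid c mid : c \in [:: x1; x2] -> uniq (x1 :: x2 :: mid) -> c \notin mid.
Proof. by rewrite /= !inE negb_or => /orP [] /eqP -> /and3P [/andP [_ ?] ? _]. Qed.

Lemma bc_closed_walk_lift Q l : cycle_walk s' t' A' Q x1 l ->
  exists a b lG mid, bc_path Q a b lG mid.
Proof.
case=> + size_l + + QA' defQ; case/lastP: l size_l defQ => [|l [g z]] //.
rewrite size_rcons ltnS walk_rcons => size_l defQ /and3P [walk_l jg /eqP zx1].
subst z; rewrite map_rcons rcons_uniq => /andP [x1l ul] ues.
set m := last x1 (map snd l) in walk_l jg.
have lA' : {subset map fst l <= A'}.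
  by move=> e el; apply: (subsetP QA'); rewrite defQ inE map_rcons mem_rcons inE el orbT.
have gA' : g \in A' by apply: (subsetP QA'); rewrite defQ inE map_rcons mem_rcons mem_head.
have m1 : m != x1 by apply: joins_neq _ jg; move: gA'; rewrite inE => /andP [].
have [a a12 walk_a] := walk_of_bc_walk_from_x1 walk_l size_l x1l lA'.
have [b b12 jb] : exists2 b, b \in [:: x1; x2] & joins src tgt g b m.
  by apply: joins_of_bc_joins_x1 => //; rewrite joinsC.
exists a, b, (rcons l (g, b)), (map snd l); split => //.
- by rewrite walk_rcons (walk_last walk_a) walk_a joinsC jb eqxx.
- by rewrite size_rcons.
- by rewrite map_rcons.
- by have := bc_walk_notin_x2 walk_l; rewrite /= inE negb_or x1l x12 ul => ->.
- by move: ues; rewrite !map_rcons.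
- by rewrite defQ !map_rcons.
- have walk_cl : walk s' t' x1 (rcons l (g, x1)) x1 by rewrite walk_rcons walk_l jg eqxx.
  move=> x xl; rewrite defQ; apply: (walk_cverts walk_cl); first by rewrite size_rcons.
  by rewrite map_rcons -rcons_cons mem_rcons in_cons xl orbT.
Qed.

Lemma bc_cycle_visits_x1 Q u l : cycle_walk s' t' A' Q u l ->
  ~ is_cycle src tgt [set: E] Q -> x1 \in map snd l.
Proof.
case=> walk_l size_l uvs ues _ defQ notG; apply/negPn/negP => x1l; apply: notG.
have u1 : u != x1 by apply: contraNneq x1l => <-; apply: walk_last_mem walk_l (ltnW size_l).
by apply/is_cycleP; exists u, l; split; rewrite ?subsetT ?walk_of_bc_walk.
Qed.

Lemma bc_path_closed_cycle Q a l mid : bc_path Q a a l mid -> is_cycle src tgt [set: E] Q.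
Proof.
case=> a12 _ walk_l size_l verts umid ues defQ _ _; apply/is_cycleP; exists a, l.
split; rewrite ?subsetT // verts rcons_uniq (notin_mid a12 umid).
by case/and3P: umid.
Qed.

Lemma bc_path_rev Q a b l mid : bc_path Q a b l mid -> exists lR, bc_path Q b a lR (rev mid).
Proof.
case=> a12 b12 walk_l size_l verts umid ues defQ QA' Qcv.
have [lR [walk_lR edges_lR verts_lR]] := walk_rev walk_l.
have perm_edges : perm_eq (map fst lR) (map fst l) by rewrite edges_lR perm_rev.
exists lR; split => //.
- by rewrite -(size_map fst) (perm_size perm_edges) size_map.
- by move: verts_lR; rewrite verts -rcons_cons rev_rcons rev_cons => [[]].
- by move: umid; rewrite /= !inE !mem_rev rev_uniq.
- by rewrite (perm_uniq perm_edges).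
- by rewrite defQ; apply/setP => e; rewrite !inE (perm_mem perm_edges).
- by move=> v; rewrite in_cons mem_rev -in_cons; apply: Qcv.
Qed.

Lemma bc_cycle_path Q : is_cycle s' t' A' Q -> ~ is_cycle src tgt [set: E] Q ->
  exists l mid, bc_path Q x1 x2 l mid.
Proof.
move=> /is_cycleP [u [l cw]] notG.
have [l1 cw1] := cycle_walk_rot cw (bc_cycle_visits_x1 cw notG).
have [a [b [lG [mid P]]]] := bc_closed_walk_lift cw1.
move: (bc_path_src P) (bc_path_tgt P); rewrite !inE.
case/orP => /eqP ea; case/orP => /eqP eb; subst a b.
- by case: notG; apply: bc_path_closed_cycle P.
- by exists lG, mid.
- by have [lR PR] := bc_path_rev P; exists lR, (rev mid).
- by case: notG; apply: bc_path_closed_cycle P.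
Qed.

Lemma bc_path_ends_cverts Q a b l mid : bc_path Q a b l mid ->
  a \in cverts src tgt Q /\ b \in cverts src tgt Q.
Proof.
case=> _ _ walk_l size_l verts _ _ -> _ _.
have sub := walk_cverts walk_l (ltnW size_l).
by rewrite !sub // ?mem_head // in_cons verts mem_rcons mem_head orbT.
Qed.

Lemma bc_paths_union Q Q' l l' m m' :
  #|cverts s' t' Q :&: cverts s' t' Q'| = 1 ->
  bc_path Q x1 x2 l m -> bc_path Q' x1 x2 l' m' ->
  Q :&: Q' = set0 /\ is_cycle src tgt (del_vertex_edges src tgt x0) (Q :|: Q').
Proof.
move=> meet1 P P'.
have meet v : v \in cverts s' t' Q -> v \in cverts s' t' Q' -> v = x1.
  have x1Q := bc_path_cverts P (mem_head _ _).
  have x1Q' := bc_path_cverts P' (mem_head _ _).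
  by move=> vQ vQ'; apply: (card_le1_eqP (eq_leq meet1)); rewrite inE ?vQ ?x1Q.
have disjQ : Q :&: Q' = set0.
  apply/setP => e; rewrite !inE; apply/negP => /andP [eQ eQ'].
  have : e \in A' by apply: (subsetP (bc_path_sub P)).
  rewrite inE => /andP [_]; apply/negP; rewrite negbK.
  have [sQ sQ'] := (cverts_src s' t' eQ, cverts_src s' t' eQ').
  have [tQ tQ'] := (cverts_tgt s' t' eQ, cverts_tgt s' t' eQ').
  by rewrite (meet _ sQ sQ') (meet _ tQ tQ').
split=> //.
have QQ' : Q :|: Q' = [set e in map fst l ++ map fst l'].
  by rewrite (bc_path_edges P) (bc_path_edges P'); apply/setP => e; rewrite !inE mem_cat.
rewrite QQ'; apply: walks_union_cycle (bc_path_walk P) (bc_path_walk P')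
  (bc_path_verts P) (bc_path_verts P') _ _ _.
- move: (bc_path_mid P) (bc_path_mid P'); rewrite /= !inE !mem_cat !negb_or cat_uniq.
  move=> /and3P [/andP [-> ->] -> ->] /and3P [/andP [_ ->] -> ->] /=.
  rewrite andbT; apply/hasPn => v vm'; apply/negP => vm.
  have vQ : v \in cverts s' t' Q by apply: (bc_path_cverts P); rewrite in_cons vm orbT.
  have vQ' : v \in cverts s' t' Q' by apply: (bc_path_cverts P'); rewrite in_cons vm' orbT.
  by have := notin_mid (mem_head x1 _) (bc_path_mid P); rewrite -(meet v vQ vQ') vm.
- rewrite cat_uniq (bc_path_uniq_edges P) (bc_path_uniq_edges P') andbT /=.
  apply/hasPn => e el'; apply/negP => el.
  by have := in_set0 e; rewrite -disjQ inE (bc_path_edges P) (bc_path_edges P') !inE el el'.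
- rewrite -QQ' subUset.
  by rewrite !(subset_trans _ bc_edges_sub) ?(bc_path_sub P) ?(bc_path_sub P').
Qed.

End Bicontraction.

Theorem lemma5p1 (V E : finType) (src tgt : E -> V)
  (loopless : forall e, src e != tgt e)
  (x0 x1 x2 : V)
  (deg2 : degree src tgt x0 = 2)
  (x12 : x1 != x2)
  (adj1 : exists e, joins src tgt e x0 x1)
  (adj2 : exists e, joins src tgt e x0 x2)
  (Q Q' : {set E}) :
  osculating_bicycle (bc_src src x0 x1 x2) (bc_tgt tgt x0 x1 x2)
    (bc_edges src tgt x0 x1 x2) Q Q' ->
  ~ is_cycle src tgt [set: E] Q ->
  ~ is_cycle src tgt [set: E] Q' ->
  isolating_cycle src tgt x0 (Q :|: Q') /\ ~~ odd #|Q :|: Q'|.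
Proof.
move=> [cycQ cycQ' meet1 par] notQ notQ'.
have [l [m P]] := bc_cycle_path x12 cycQ notQ.
have [l' [m' P']] := bc_cycle_path x12 cycQ' notQ'.
have [disjQ cycU] := bc_paths_union meet1 P P'.
have [x1Q x2Q] := bc_path_ends_cverts P.
split; last by rewrite cardsU disjQ cards0 subn0 oddD par addbb.
apply: (degree2_isolating_cycle loopless deg2 x12 adj1 adj2 cycU);
  exact: cvertsS (subsetUl Q Q') _ _.
Qed.
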